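(* Let $N=(V,E)$ be a tree-child phylogenetic network such that no two parents of a hybrid node are connected by a path. For all nodes $u,v\in V$ with $C(u)\neq C(v)$, the following are equivalent: (i) there is a non-trivial path $u\rightsquigarrow v$; (ii) $C(v)\subsetneq C(u)$.
   Context: A DAG is labeled in a finite set $S$ if its leaves (out-degree 0) are bijectively labeled by $S$. A tree node has in-degree at most 1; a hybrid node has in-degree greater than 1; a tree child of a node is a child that is a tree node. A tree-child phylogenetic network is a rooted DAG labeled in $S$ in which every non-leaf node has at least one tree child, no tree node has out-degree 1, and every hybrid node has out-degree exactly 1. The condition that no two parents of a hybrid node are connected by a path means: if $u_1,u_2$ are the parents of a hybrid node, there is no path $u_1\rightsquigarrow u_2$ nor $u_2\rightsquigarrow u_1$. A path is non-trivial if it has length at least 1. $C(u)$ is the set of leaves that are descendants of $u$. *)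

From mathcomp Require Import all_boot.
Set Implicit Arguments. Unset Strict Implicit. Unset Printing Implicit Defensive.

Section Network.
Variables (V : finType) (E : rel V).

Definition indeg (v : V) : nat := #|[set u | E u v]|.
Definition outdeg (v : V) : nat := #|[set w | E v w]|.
Definition leaf (v : V) : bool := outdeg v == 0.
Definition tree_node (v : V) : bool := indeg v <= 1.
Definition hybrid (v : V) : bool := 1 < indeg v.

Definition npath (u v : V) : Prop := exists w, E u w && connect E w v.

Definition acyclic : Prop := forall u, ~ npath u u.
Definition rooted : Prop :=
  exists r, [/\ indeg r = 0, forall v, connect E r v & forall v, indeg v = 0 -> v = r].

Definition labeled_in (S : finType) : Prop :=
  exists f : S -> V, injective f /\ forall v, leaf v <-> exists s, f s = v.

Definition tree_child_network (S : finType) : Prop :=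
  [/\ acyclic, rooted, labeled_in S &
     [/\ (forall u, ~~ leaf u -> exists w, E u w && tree_node w),
      (forall u, tree_node u -> outdeg u != 1) &
      (forall h, hybrid h -> outdeg h = 1)]].

Definition no_hybrid_parents_path : Prop :=
  forall h u1 u2, hybrid h -> E u1 h -> E u2 h -> u1 != u2 ->
    ~~ connect E u1 u2.

Definition C (u : V) : {set V} := [set x | leaf x & connect E u x].

End Network.

(* Following tree children from any node v reaches a leaf l whose ancestors
   are all comparable with v: since each node on the way has a unique parent,
   a path into l either passes through v or enters the chain below v.  If
   C(v) is strictly contained in C(u), then l is a descendant of u, so u is
   an ancestor of v (being a descendant of v would force C(u) to be inside
   C(v)), and u <> v because C(u) <> C(v). *)

From mathcomp Require Import all_boot.

Set Implicit Arguments.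
Unset Strict Implicit.
Unset Printing Implicit Defensive.

Section Reachability.
Variables (V : finType) (E : rel V).

Lemma connect_lastP (x w : V) :
  connect E x w -> x = w \/ exists2 y, connect E x y & E y w.
Proof.
case/connectP=> p; case/lastP: p => [|p y] /=; first by move=> _ ->; left.
rewrite rcons_path last_rcons => /andP[xp Ey] ->; right.
by exists (last x p) => //; apply/connectP; exists p.
Qed.

Lemma connect_firstP (x w : V) :
  connect E x w -> x = w \/ exists2 y, E x y & connect E y w.
Proof.
case/connectP=> [[|y p]] /=; first by move=> _ ->; left.
by case/andP=> Exy yp ->; right; exists y => //; apply/connectP; exists p.
Qed.

Lemma npath_connect (u v : V) : npath E u v -> connect E u v.
Proof. by case=> w /andP[Euw Cwv]; apply: connect_trans (connect1 Euw) Cwv. Qed.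

Lemma connect_neq_npath (u v : V) : connect E u v -> u != v -> npath E u v.
Proof.
case/connect_firstP=> [-> | [w Euw Cwv]]; first by rewrite eqxx.
by exists w; rewrite Euw.
Qed.

Lemma C_connect_subset (u v : V) : connect E u v -> C E v \subset C E u.
Proof.
move=> Cuv; apply/subsetP => x; rewrite !inE => /andP[-> Cvx].
exact: connect_trans Cuv Cvx.
Qed.

Lemma tree_node_parent_uniq (w a b : V) :
  tree_node E w -> E a w -> E b w -> a = b.
Proof.
rewrite /tree_node /indeg => indeg_le1 Eaw Ebw; apply/eqP; apply: contraTT indeg_le1.
have sub_ab : [set a; b] \subset [set u | E u w].
  by apply/subsetP => z; rewrite !inE => /orP[] /eqP ->.
move=> neq_ab; rewrite -ltnNge; apply: leq_trans (subset_leq_card sub_ab).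
by rewrite cards2 neq_ab.
Qed.

Lemma descendants_proper (v w : V) :
  acyclic E -> E v w -> [set y | connect E w y] \proper [set y | connect E v y].
Proof.
move=> acyc Evw; rewrite properE; apply/andP; split.
  by apply/subsetP => z; rewrite !inE; apply: connect_trans (connect1 Evw).
apply/subsetP => /(_ v); rewrite !inE connect0 => /(_ isT) Cwv.
by apply: (acyc v); exists w; rewrite Evw.
Qed.

Hypotheses (acyc : acyclic E)
  (tree_child : forall u, ~~ leaf E u -> exists w, E u w && tree_node E w).

Lemma tree_path_leaf (v : V) :
  exists l, [/\ leaf E l, connect E v l &
    forall x, connect E x l -> connect E x v \/ connect E v x].
Proof.
move: {2}#|_| (leqnn #|[set y | connect E v y]|) => n.
elim: n v => [|n IHn] v desc_le.
  by move: desc_le; rewrite leqn0 cards_eq0 => /eqP/setP/(_ v); rewrite !inE connect0.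
have [leaf_v | /tree_child [w /andP[Evw tree_w]]] := boolP (leaf E v).
  by exists v; split=> // x; left.
have /IHn [l [leaf_l Cwl ancestors_l]] : #|[set y | connect E w y]| <= n.
  by rewrite -ltnS (leq_trans (proper_card (descendants_proper acyc Evw))).
exists l; split=> //; first exact: connect_trans (connect1 Evw) Cwl.
move=> x /ancestors_l [Cxw | Cwx]; last by right; apply: connect_trans (connect1 Evw) Cwx.
case: (connect_lastP Cxw) => [-> | [y Cxy Eyw]]; first by right; apply: connect1.
by left; rewrite (tree_node_parent_uniq tree_w Evw Eyw).
Qed.

End Reachability.

Theorem lemma6 (S V : finType) (E : rel V) :
  tree_child_network E S ->
  no_hybrid_parents_path E ->
  forall u v : V, C E u != C E v ->
    (npath E u v <-> C E v \proper C E u).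
Proof.
move=> [acyc _ _ [tree_child _ _]] _ u v neq_C; split.
  by move/npath_connect/C_connect_subset => sub_C; rewrite properEneq eq_sym neq_C.
rewrite properE => /andP[sub_vu not_sub_uv].
have [l [leaf_l Cvl ancestors_l]] := tree_path_leaf acyc tree_child v.
have : l \in C E u by apply: (subsetP sub_vu); rewrite inE leaf_l.
rewrite inE => /andP[_ /ancestors_l [Cuv | Cvu]].
  by apply: connect_neq_npath Cuv _; apply: contraNneq neq_C => ->.
by rewrite C_connect_subset in not_sub_uv.
Qed.
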